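(* For every $n \geq 2$, $n-1$ divides $d_{n1}$.
   Context: A linear arrangement of $\{1,\ldots,n\}$ is a sequence $a_1\cdots a_n$ in which each of $1,\ldots,n$ appears exactly once. It contains the pattern $ij$ if $a_t=i$ and $a_{t+1}=j$ for some $t$; otherwise it avoids it. $d_{n1}$ is the number of linear arrangements of $\{1,\ldots,n\}$ that avoid all of the patterns $12, 23, \ldots, (n-1)n$ and contain the pattern $n1$. *)

From mathcomp Require Import all_boot.
Set Implicit Arguments. Unset Strict Implicit. Unset Printing Implicit Defensive.

Definition linear_arrangement (n : nat) (s : seq nat) : bool :=
  perm_eq s (iota 1 n).

Definition contains_pattern (s : seq nat) (i j : nat) : bool :=
  has (fun t => (nth 0 s t == i) && (nth 0 s t.+1 == j)) (iota 0 (size s).-1).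

(* d_{n1}: arrangements avoiding 12, 23, ..., (n-1)n and containing n1.
   permutations (iota 1 n) enumerates each arrangement exactly once. *)
Definition d_n1 (n : nat) : nat :=
  count (fun s => linear_arrangement n s
                  && all (fun i => ~~ contains_pattern s i i.+1) (iota 1 n.-1)
                  && contains_pattern s n 1)
        (permutations (iota 1 n)).

(* Removing n from an arrangement of {1,...,n} in which n is immediately
   followed by 1 puts the predecessor l of n directly before 1; l n is a
   succession exactly when l 1 is a cyclic succession modulo n-1.  Hence d_n1
   counts the arrangements of {1,...,n-1} without cyclic successions
   i (i+1 mod n-1).  Adding 1 modulo n-1 to every entry permutes these
   arrangements and shifts the first entry cyclically, so the n-1 possible
   first entries occur equally often. *)

From mathcomp Require Import all_boot zify.

Set Implicit Arguments. Unset Strict Implicit. Unset Printing Implicit Defensive.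

Section SeqFacts.

Variable T : eqType.
Implicit Types (s : seq T) (x y : T).

Fixpoint adjacent_pairs s : seq (T * T) :=
  if s is x :: s' then
    if s' is y :: _ then (x, y) :: adjacent_pairs s' else [::]
  else [::].

Lemma adjacent_pairs_cat s1 x s2 :
  adjacent_pairs (s1 ++ x :: s2) =
  adjacent_pairs (rcons s1 x) ++ adjacent_pairs (x :: s2).
Proof. by elim: s1 => [|a s1 IH] //=; rewrite IH; case: s1 {IH}. Qed.

Lemma mem_adjacent_pairs s x y :
  (x, y) \in adjacent_pairs s -> (x \in s) && (y \in behead s).
Proof.
elim: s => [|a [|b s] IH] //=; rewrite inE => /orP[/eqP[-> ->] | /IH].
  by rewrite !inE !eqxx.
by case/andP=> xs ys; rewrite xs orbT (mem_behead ys).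
Qed.

Lemma adjacent_pairsP s x y :
  reflect (exists s1 s2, s = s1 ++ x :: y :: s2) ((x, y) \in adjacent_pairs s).
Proof.
apply: (iffP idP) => [|[s1 [s2 ->]]]; last first.
  by rewrite adjacent_pairs_cat mem_cat inE eqxx orbT.
elim: s => [|a [|b s] IH] //=; rewrite inE => /orP[/eqP[-> ->] | /IH[s1 [s2 ->]]].
  by exists [::], s.
by exists (a :: s1), s2.
Qed.

Lemma rem_cat_notin s1 x s2 : x \notin s1 -> rem x (s1 ++ x :: s2) = s1 ++ s2.
Proof.
elim: s1 => [|a s1 IH] /=; first by rewrite eqxx.
by rewrite inE negb_or eq_sym => /andP[/negbTE-> /IH->].
Qed.

Definition insert_before y x s := take (index x s) s ++ y :: drop (index x s) s.

Lemma insert_before_cat y s1 x s2 :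
  x \notin s1 -> insert_before y x (s1 ++ x :: s2) = s1 ++ y :: x :: s2.
Proof.
move=> xNs1; rewrite /insert_before index_cat (negbTE xNs1) /= eqxx addn0.
by rewrite take_size_cat // drop_size_cat.
Qed.

End SeqFacts.

Lemma adjacent_pairs_map (T1 T2 : eqType) (f : T1 -> T2) s :
  adjacent_pairs (map f s) = [seq (f p.1, f p.2) | p <- adjacent_pairs s].
Proof. by elim: s => [|a [|b s] IH] //=; rewrite -IH. Qed.

Lemma contains_patternE s i j : contains_pattern s i j = ((i, j) \in adjacent_pairs s).
Proof.
rewrite /contains_pattern; elim: s => [|x [|y s] IH] //=.
rewrite -[1]/(1 + 0) iotaDl has_map inE -IH /= xpair_eqE [i == x]eq_sym [j == y]eq_sym.
by congr (_ || _); apply: eq_has.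
Qed.

Lemma count_bij (T1 T2 : eqType) (S1 : seq T1) (S2 : seq T2)
    (P1 : pred T1) (P2 : pred T2) (f : T1 -> T2) (g : T2 -> T1) :
  uniq S1 -> uniq S2 ->
  {in S1, forall x, P1 x -> [/\ f x \in S2, P2 (f x) & g (f x) = x]} ->
  {in S2, forall y, P2 y -> [/\ g y \in S1, P1 (g y) & f (g y) = y]} ->
  count P1 S1 = count P2 S2.
Proof.
move=> uS1 uS2 fP gP; rewrite -!size_filter -(size_map f).
apply/perm_size/uniq_perm; rewrite ?filter_uniq //.
  rewrite map_inj_in_uniq ?filter_uniq //; apply: (can_in_inj (g := g)) => x.
  by rewrite mem_filter => /andP[P1x /fP /(_ P1x)[]].
move=> y; rewrite mem_filter; apply/mapP/andP => [[x] | [P2y /gP /(_ P2y)[gyS1 P1gy <-]]].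
  by rewrite mem_filter => /andP[P1x /fP /(_ P1x)[fxS2 P2fx _]] ->.
by exists (g y); rewrite // mem_filter P1gy.
Qed.

Lemma count_by_key (T K : eqType) (key : T -> K) (L : seq K) (P : pred T) (S : seq T) :
  uniq L -> {in S, forall x, key x \in L} ->
  count P S = \sum_(k <- L) count (fun x => P x && (key x == k)) S.
Proof.
move=> uL; elim: S => [|x S IH] keyS; first by rewrite big1.
rewrite /= big_split /= -IH => [|y yS]; last by apply: keyS; rewrite inE yS orbT.
congr (_ + _); rewrite (bigD1_seq (key x)) ?keyS ?mem_head //= eqxx andbT.
rewrite big1 ?addn0 // => k.
by rewrite eq_sym => /negbTE->; rewrite andbF.
Qed.

Definition succession_free (f : nat -> nat) (s : seq nat) : bool :=
  all (fun p => p.2 != f p.1) (adjacent_pairs s).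

Definition cyc_succ (m a : nat) : nat := if a == m then 1 else a.+1.

Lemma cyc_succ_gt0 m a : 0 < cyc_succ m a.
Proof. by rewrite /cyc_succ; case: eqP. Qed.

Lemma cyc_succ_inj m : {in [pred a | 0 < a] &, injective (cyc_succ m)}.
Proof.
by move=> a b; rewrite !inE /cyc_succ => a_gt0 b_gt0; case: (a =P m); case: (b =P m); lia.
Qed.

Lemma succession_free_map_cyc_succ m t : all (fun a => 0 < a) t ->
  succession_free (cyc_succ m) (map (cyc_succ m) t) = succession_free (cyc_succ m) t.
Proof.
move=> /allP t_gt0; rewrite /succession_free adjacent_pairs_map all_map.
apply: eq_in_all => -[a b] /mem_adjacent_pairs /andP[_ /mem_behead /t_gt0 b_gt0] /=.
by rewrite (inj_in_eq (@cyc_succ_inj m)) ?inE ?cyc_succ_gt0.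
Qed.

Lemma succession_free_cons2 f x y s :
  succession_free f [:: x, y & s] = (y != f x) && succession_free f (y :: s).
Proof. by []. Qed.

Lemma succession_free_cat f s1 x s2 :
  succession_free f (s1 ++ x :: s2) =
  succession_free f (rcons s1 x) && succession_free f (x :: s2).
Proof. by rewrite /succession_free adjacent_pairs_cat all_cat. Qed.

Lemma succession_free_succn_cyc_succ m s :
  1 \notin behead s -> m.+1 \notin behead s ->
  succession_free succn s = succession_free (cyc_succ m) s.
Proof.
move=> oneN topN; apply: eq_in_all => -[a b] /mem_adjacent_pairs /andP[_ bs] /=.
rewrite /cyc_succ; case: (a =P m) => // ->.
by rewrite (memPn oneN _ bs) (memPn topN _ bs).
Qed.

Lemma perm_iota_insert_top m s1 s2 :
  perm_eq (s1 ++ m.+1 :: s2) (iota 1 m.+1) = perm_eq (s1 ++ s2) (iota 1 m).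
Proof.
have -> : iota 1 m.+1 = iota 1 m ++ [:: m.+1].
  by rewrite -[m.+1]addn1 iotaD add1n addn1.
by rewrite -cat1s perm_catCA perm_catC perm_cat2r.
Qed.

Section RemoveTop.

Variables (m : nat) (s1 s2 : seq nat).
Hypothesis perm_s : perm_eq (s1 ++ m.+1 :: 1 :: s2) (iota 1 m.+1).

Lemma top_one_notin :
  [/\ 0 \notin s1, 1 \notin s1, m.+1 \notin s1, 1 \notin s2 & m.+1 \notin s2].
Proof.
have : uniq (m.+1 :: 1 :: s1 ++ s2).
  by rewrite -(uniq_catCA s1 [:: m.+1; 1]) (perm_uniq perm_s) iota_uniq.
rewrite /= inE !mem_cat !negb_or => /and3P[/and3P[_ -> ->] /andP[-> ->] _].
split=> //; apply: contraTN isT => zero1.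
by have := perm_mem perm_s 0; rewrite mem_cat zero1 mem_iota.
Qed.

Lemma succession_free_remove_top :
  succession_free succn (s1 ++ m.+1 :: 1 :: s2) =
  succession_free (cyc_succ m) (s1 ++ 1 :: s2).
Proof.
have [zero1 one1 top1 one2 top2] := top_one_notin.
have tail_eq : succession_free succn (1 :: s2) = succession_free (cyc_succ m) (1 :: s2).
  exact: succession_free_succn_cyc_succ.
case/lastP: s1 zero1 one1 top1 => [|s l] zero1 one1 top1.
  by rewrite !cat0s succession_free_cons2 tail_eq.
have behead_notin x : x \notin rcons s l -> x \notin behead (rcons s l).
  by apply: contra; apply: mem_behead.
rewrite !cat_rcons !succession_free_cat !succession_free_cons2 tail_eq.
rewrite (@succession_free_succn_cyc_succ m (rcons s l)) ?behead_notin //.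
rewrite -[1 != m.+2]/true andTb; congr (_ && _); rewrite /cyc_succ.
have l_gt0 : 0 < l.
  by rewrite lt0n; apply: contraNneq zero1 => <-; rewrite mem_rcons mem_head.
by case: (l =P m) => [-> | /eqP]; rewrite ?eqxx //; lia.
Qed.

End RemoveTop.

Lemma d_n1E m :
  d_n1 m.+1 = count (fun s => succession_free succn s && ((m.+1, 1) \in adjacent_pairs s))
                    (permutations (iota 1 m.+1)).
Proof.
apply: eq_in_count => s; rewrite mem_permutations => perm_s.
rewrite /linear_arrangement perm_s contains_patternE; congr (_ && _).
apply/allP/allP => [avoid [a b] ab | free i _].
  apply/eqP => /= b_eq; subst b; have /andP[a_s /mem_behead b_s] := mem_adjacent_pairs ab.
  rewrite !(perm_mem perm_s) !mem_iota in a_s b_s.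
  have /negP[] : ~~ contains_pattern s a a.+1 by apply: avoid; rewrite mem_iota; lia.
  by rewrite contains_patternE.
by rewrite contains_patternE; apply/negP => /free; rewrite /= eqxx.
Qed.

Lemma count_top_before_one m : 0 < m ->
  count (fun s => succession_free succn s && ((m.+1, 1) \in adjacent_pairs s))
        (permutations (iota 1 m.+1)) =
  count (succession_free (cyc_succ m)) (permutations (iota 1 m)).
Proof.
move=> m_gt0; apply: (count_bij (f := rem m.+1) (g := insert_before m.+1 1));
  rewrite ?permutations_uniq // => s.
  rewrite mem_permutations => perm_s /andP[free /adjacent_pairsP[s1 [s2 def_s]]].
  move: perm_s free; rewrite {}def_s => perm_s free.
  have [_ one1 top1 _ _] := top_one_notin perm_s.
  rewrite rem_cat_notin // insert_before_cat // mem_permutations -perm_iota_insert_top.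
  by rewrite -succession_free_remove_top.
rewrite mem_permutations => perm_s free.
have one_s : 1 \in s by rewrite (perm_mem perm_s) mem_iota; lia.
move: perm_s free; case/splitPr: one_s => s1 s2.
rewrite -perm_iota_insert_top => perm_s free.
have [_ one1 top1 _ _] := top_one_notin perm_s.
rewrite insert_before_cat // rem_cat_notin // mem_permutations perm_s.
rewrite succession_free_remove_top //; split=> //; apply/andP; split=> //.
by apply/adjacent_pairsP; exists s1, s2.
Qed.

Lemma map_cyc_succ_iota m : map (cyc_succ m) (iota 1 m) = rot 1 (iota 1 m).
Proof.
case: m => // m.
rewrite -[iota 1 m.+1 in RHS]/(1 :: iota (1 + 1) m) rot1_cons iotaDl.
have -> : iota 1 m.+1 = rcons (iota 1 m) m.+1.
  by rewrite -cats1 -[m.+1]addn1 iotaD add1n addn1.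
rewrite map_rcons /cyc_succ eqxx; congr rcons; apply/eq_in_map => a.
by rewrite mem_iota => a_lt; case: eqP => //; lia.
Qed.

Section CyclicRotation.

Variable m : nat.
Let S := permutations (iota 1 m).

Lemma all_gt0_of_perm t : t \in S -> all (fun a => 0 < a) t.
Proof.
rewrite mem_permutations => perm_t; apply/allP => a.
by rewrite (perm_mem perm_t) mem_iota => /andP[].
Qed.

Lemma perm_map_cyc_succ : perm_eq (map (map (cyc_succ m)) S) S.
Proof.
have map_in t : t \in S -> map (cyc_succ m) t \in S.
  rewrite !mem_permutations => perm_t.
  by rewrite perm_sym -(perm_rot 1) -map_cyc_succ_iota; apply: perm_map; rewrite perm_sym.
have inj : {in S &, injective (map (cyc_succ m))}.
  move=> t u /all_gt0_of_perm t_gt0 /all_gt0_of_perm u_gt0.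
  exact: (inj_in_map (@cyc_succ_inj m)).
have uniq_map : uniq (map (map (cyc_succ m)) S).
  by rewrite map_inj_in_uniq ?permutations_uniq.
apply: uniq_perm; rewrite ?permutations_uniq //.
apply: (uniq_min_size uniq_map _ _).2; last by rewrite size_map.
by move=> _ /mapP[t tS ->]; apply: map_in.
Qed.

Variable P : pred (seq nat).
Hypothesis P_rot : {in S, forall t, P (map (cyc_succ m) t) = P t}.

Lemma count_head_cyc_succ a : 0 < a ->
  count (fun t => P t && (head 0 t == cyc_succ m a)) S =
  count (fun t => P t && (head 0 t == a)) S.
Proof.
move=> a_gt0; rewrite -(permP perm_map_cyc_succ) count_map.
apply: eq_in_count => t tS /=; rewrite P_rot //; congr (_ && _).
case: t tS => [|x t] tS /=; first by rewrite !(eq_sym 0) gtn_eqF ?cyc_succ_gt0 // gtn_eqF.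
have /andP[x_gt0 _] := all_gt0_of_perm tS.
exact: (inj_in_eq (@cyc_succ_inj m)).
Qed.

Lemma count_head_const a : 0 < a <= m ->
  count (fun t => P t && (head 0 t == a)) S = count (fun t => P t && (head 0 t == 1)) S.
Proof.
elim: a => // a IH /andP[_ a_lt]; case: (posnP a) => [-> // | a_gt0].
have -> : a.+1 = cyc_succ m a by rewrite /cyc_succ ltn_eqF.
by rewrite count_head_cyc_succ // IH // a_gt0 ltnW.
Qed.

Lemma dvdn_count_cyc_succ_invariant : 0 < m -> m %| count P S.
Proof.
move=> m_gt0; rewrite (@count_by_key _ _ (head 0) (iota 1 m)) ?iota_uniq //; last first.
  move=> [|x t]; rewrite mem_permutations => perm_t /=.
    by move/perm_size: perm_t; rewrite size_iota => m0; rewrite -m0 in m_gt0.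
  by rewrite -(perm_mem perm_t) mem_head.
rewrite (eq_big_seq (fun=> count (fun t => P t && (head 0 t == 1)) S)); last first.
  by move=> a; rewrite mem_iota => a_range; apply: count_head_const; lia.
by rewrite big_const_seq count_predT size_iota iter_addn_0 dvdn_mull.
Qed.

End CyclicRotation.

Theorem corollary4p10 : forall n : nat, 2 <= n -> n.-1 %| d_n1 n.
Proof.
case=> [|m] // m_gt0; rewrite d_n1E count_top_before_one //.
apply: dvdn_count_cyc_succ_invariant => // t /all_gt0_of_perm.
exact: succession_free_map_cyc_succ.
Qed.
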